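(* Let $n\in\mathbb{N}$ and $\alpha=(a_1,\dots,a_n)\in PP_n$. Define $\mathrm{T}(\alpha)=(b_1,\dots,b_n)$ recursively by $b_1=a_1$ and, for $2\le i\le n$, $$b_i=\begin{cases} a_i-1 & \text{if } a_i\neq 1 \text{ and } a_i=b_j \text{ for some } 1\le j<i,\\ a_i & \text{otherwise.}\end{cases}$$ Then $\alpha$ is a $1$-Naples (Naples) parking function, i.e. $\alpha\in PF_{n,1}$, if and only if $\mathrm{T}(\alpha)$ is a classical parking function, i.e. $\mathrm{T}(\alpha)\in PF_{n,0}$.
   Context: For $n\in\mathbb{N}$ let $[n]=\{1,\dots,n\}$ and $PP_n=[n]^n$ (parking preferences). For an integer $k\ge 0$, the $k$-Naples parking rule: there are $n$ spots numbered $1,\dots,n$ west to east, initially empty; cars $c_1,\dots,c_n$ arrive in order, car $c_i$ preferring spot $a_i$. If spot $a_i$ is empty, $c_i$ parks there. Otherwise $c_i$ checks spots $a_i-1,\dots,a_i-k$ in this order (skipping those $<1$) and parks in the first empty one; if all are occupied, it drives east and parks in the first empty spot numbered greater than $a_i$, failing to park if none exists. $PF_{n,k}$ is the set of $\alpha\in PP_n$ for which all cars park. $PF_{n,0}=PF_n$ is the set of classical parking functions (equivalently, $\alpha$ whose weakly increasing rearrangement $(\beta_1,\dots,\beta_n)$ satisfies $\beta_i\le i$ for all $i$). *)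

From mathcomp Require Import all_boot.
Set Implicit Arguments. Unset Strict Implicit. Unset Printing Implicit Defensive.

(* Preferences are sequences of naturals; spots are numbered 1..n. *)
Definition PP (n : nat) (a : seq nat) : bool :=
  (size a == n) && all (fun x => (1 <= x <= n)%N) a.

Definition back_spots (k a : nat) : seq nat :=
  [seq a - j | j <- iota 1 k & (j < a)%N].

Definition fwd_spots (n a : nat) : seq nat := iota a.+1 (n - a).

(* Where a car preferring spot [a] parks under the k-Naples rule, given the
   list [occ] of occupied spots; None if it fails to park. *)
Definition park_car (k n : nat) (occ : seq nat) (a : nat) : option nat :=
  if a \notin occ then Some a
  else match [seq s <- back_spots k a | s \notin occ] with
       | s :: _ => Some s
       | [::] => match [seq s <- fwd_spots n a | s \notin occ] with
                 | s :: _ => Some s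
                 | [::] => None
                 end
       end.

Fixpoint all_park (k n : nat) (occ : seq nat) (prefs : seq nat) : bool :=
  match prefs with
  | [::] => true
  | a :: r => match park_car k n occ a with
              | Some s => all_park k n (s :: occ) r
              | None => false
              end
  end.

(* PF_{n,k}: k-Naples parking functions of length n.  PF n 0 = classical. *)
Definition PF (n k : nat) (a : seq nat) : bool := PP n a && all_park k n [::] a.

(* The map T: b_1 = a_1, b_i = a_i - 1 if a_i <> 1 and a_i = b_j for some j < i,
   else b_i = a_i.  [prev] holds b_1..b_{i-1}. *)
Fixpoint T_aux (prev : seq nat) (a : seq nat) : seq nat :=
  match a with
  | [::] => [::]
  | x :: r => let y := if (x != 1) && (x \in prev) then x.-1 else x in
              y :: T_aux (rcons prev y) r
  end.

Definition T (a : seq nat) : seq nat := T_aux [::] a.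

From mathcomp Require Import all_boot zify.

(* We compare, car by car, the 1-Naples process driven by a = (a_1,...,a_n)
   with the classical process driven by T(a) = (b_1,...,b_n).  Both processes
   run on the same list [occ] of occupied spots, and [prev] = (b_1,...,b_{i-1})
   records the entries of T(a) produced so far.  The invariant

       prev is contained in occ, and every occupied spot x outside prev
       has its western neighbour x - 1 occupied

   is preserved by classical parking: a classical car either parks at its
   preference or drives east past occupied spots, so the spot just west of
   where it parks is occupied.  Under the invariant, the 1-Naples car with
   preference a_i parks exactly where the classical car with preference b_i
   parks (lemma [park_naples_classical]).  Hence both processes succeed or
   fail together, and since T preserves PP_n, Theorem 1.2 follows. *)

Definition T_entry (prev : seq nat) (x : nat) : nat :=
  if (x != 1) && (x \in prev) then x.-1 else x.

Lemma head_filter_iota {p : pred nat} {k m s : nat} {r : seq nat} :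
  [seq x <- iota m k | p x] = s :: r -> forall x, m <= x < s -> ~~ p x.
Proof.
elim: k m => [|k IHk] m //=.
case: ifP => pm.
  by case=> <- _ x; rewrite leqNgt => /andP[/negP].
move=> /IHk before_s x /andP[]; rewrite leq_eqVlt => /orP[/eqP<-|mx xs].
  by rewrite pm.
by apply: before_s; rewrite mx.
Qed.

Lemma head_filter {p : pred nat} {l : seq nat} {s : nat} {r : seq nat} :
  [seq x <- l | p x] = s :: r -> (s \in l) && p s.
Proof. by move=> E; rewrite andbC -mem_filter E mem_head. Qed.

(* A car driving east from spot a - 1 skips the occupied spot a, so it finds
   the same free spots as a car driving east from a. *)
Lemma fwd_spots_pred_free (n a : nat) (occ : seq nat) : 0 < a -> a \in occ ->
  [seq s <- fwd_spots n a.-1 | s \notin occ] = [seq s <- fwd_spots n a | s \notin occ].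
Proof.
move=> a_gt0 a_occ; rewrite /fwd_spots prednK //.
case: (leqP a n) => [a_le_n|n_lt_a]; last first.
  by have [-> ->] : n - a.-1 = 0 /\ n - a = 0 by lia.
have -> : n - a.-1 = (n - a).+1 by lia.
by rewrite /= a_occ.
Qed.

Lemma size_T_aux (prev a : seq nat) : size (T_aux prev a) = size a.
Proof. by elim: a prev => //= x r IHr prev; rewrite IHr. Qed.

Section Parking.

Variable n : nat.

Lemma park_classical_spec (occ : seq nat) (b s : nat) :
  park_car 0 n occ b = Some s -> s = b \/ (b \in occ /\ s.-1 \in occ).
Proof.
rewrite /park_car /back_spots /=.
case: ifP => [_ [->]|/negbFE b_occ]; first by left.
case E: [seq x <- fwd_spots n b | x \notin occ] => [//|s' r] [<-].
right; split => //.
have /andP[] := head_filter E; rewrite /fwd_spots mem_iota => /andP[b_lt_s' _] _.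
have before_s' := head_filter_iota E.
case: s' b_lt_s' {E} before_s' => [//|s'] /=.
rewrite ltnS leq_eqVlt => /orP[/eqP<- //|b_lt_s'] before_s'.
by apply/negbNE/before_s'; rewrite b_lt_s' leqnn.
Qed.

Definition shadow_inv (prev occ : seq nat) : Prop :=
  {subset prev <= occ} /\ {in occ, forall x, (x \in prev) || (x.-1 \in occ)}.

Lemma shadow_inv_park {prev occ : seq nat} {b s : nat} :
  shadow_inv prev occ -> park_car 0 n occ b = Some s ->
  shadow_inv (rcons prev b) (s :: occ).
Proof.
move=> [prev_occ occ_ok] /park_classical_spec parked; split.
- move=> x; rewrite mem_rcons inE => /orP[/eqP->|/prev_occ x_occ].
    by case: parked => [->|[b_occ _]]; rewrite inE ?eqxx ?b_occ ?orbT.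
  by rewrite inE x_occ orbT.
- move=> x; rewrite inE => /orP[/eqP->|x_occ].
    case: parked => [->|[_ s_occ]]; first by rewrite mem_rcons mem_head.
    by rewrite inE s_occ !orbT.
  by case/orP: (occ_ok x x_occ) => [x_prev|x_occ']; rewrite mem_rcons !inE ?x_prev ?x_occ' !orbT.
Qed.

(* If a is
   free, both park at a; if a = 1, both drive east from 1; if a is in prev,
   the Naples car first tries a - 1, which is exactly the classical
   preference; otherwise the invariant says a - 1 is occupied, so the Naples
   car drives east from a just as the classical car does. *)
Lemma park_naples_classical {prev occ : seq nat} {a : nat} :
  0 < a -> shadow_inv prev occ ->
  park_car 1 n occ a = park_car 0 n occ (T_entry prev a).
Proof.
move=> a_gt0 [prev_occ occ_ok]; rewrite /T_entry /park_car /back_spots /=.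
case: (boolP (a \in occ)) => [a_occ|a_free]; last first.
  have -> : (a \in prev) = false by apply/negbTE; apply: contra a_free; apply: prev_occ.
  by rewrite andbF a_free.
case: (eqVneq a 1) => [a_eq1|a_neq1]; first by subst a; rewrite a_occ.
have a_gt1 : 1 < a by rewrite ltn_neqAle eq_sym a_neq1 a_gt0.
rewrite a_gt1 /= subn1.
case: (boolP (a \in prev)) => [a_prev|a_nprev] /=.
  case: (boolP (a.-1 \in occ)) => //= _.
  by rewrite fwd_spots_pred_free.
have := occ_ok a a_occ; rewrite (negbTE a_nprev) /= => pred_occ.
by rewrite a_occ pred_occ.
Qed.

Lemma all_park_naples_classical {prev occ r : seq nat} :
  all (fun x => 0 < x) r -> shadow_inv prev occ ->
  all_park 1 n occ r = all_park 0 n occ (T_aux prev r).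
Proof.
elim: r prev occ => [//|a r IHr] prev occ /= /andP[a_gt0 r_gt0] inv.
rewrite -/(T_entry prev a) (park_naples_classical a_gt0 inv).
case E: (park_car 0 n occ (T_entry prev a)) => [s|//].
exact/IHr/(shadow_inv_park inv E).
Qed.

(* T keeps entries in [n]: it only decrements entries that are at least 2. *)
Lemma T_aux_in_range (prev a : seq nat) :
  all (fun x => 1 <= x <= n) a -> all (fun x => 1 <= x <= n) (T_aux prev a).
Proof.
elim: a prev => [//|x r IHr] prev /= /andP[/andP[x_ge1 x_le_n] r_ok].
rewrite IHr // andbT -/(T_entry prev x) /T_entry.
case: ifP => [/andP[x_neq1 _]|_]; last by rewrite x_ge1.
have x_gt1 : 1 < x by rewrite ltn_neqAle eq_sym x_neq1.
by rewrite -ltnS prednK ?x_gt1 //= (leq_trans (leq_pred x)).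
Qed.

Lemma T_PP (a : seq nat) : PP n a -> PP n (T a).
Proof. by rewrite /PP /T size_T_aux => /andP[-> in_range]; exact: T_aux_in_range. Qed.

End Parking.

Theorem theorem1p2 (n : nat) (a : seq nat) :
  PP n a -> (PF n 1 a <-> PF n 0 (T a)).
Proof.
move=> a_PP.
have Ta_PP : PP n (T a) by exact: T_PP.
have a_pos : all (fun x => 0 < x) a.
  by case/andP: a_PP => _; apply: sub_all => x /andP[].
have inv0 : shadow_inv [::] [::] by [].
by rewrite /PF a_PP Ta_PP /T (all_park_naples_classical n a_pos inv0).
Qed.
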